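(* Let $\mathcal{C}_1$ and $\mathcal{C}_2$ be two Wilf-equivalent permutation classes with $p$-bases $\mathcal{B}_1$ and $\mathcal{B}_2$ respectively. For $i\in\{1,2\}$ and $x\in\{top,bottom,right,left\}$ let $\mathcal{M}_{i,x}=\{M_{\tau,x}:\tau\in\mathcal{B}_i\}$. Then the eight permutation classes $Av_{\mathfrak{S}}(\mathcal{M}_{i,x})$, $i\in\{1,2\}$, $x\in\{top,bottom,right,left\}$, are all Wilf-equivalent.
   Context: A permutation $\sigma$ of $\{1,\dots,n\}$ is identified with its permutation matrix ($M_\sigma(i,j)=1$ iff $i=\sigma(j)$, rows numbered bottom to top). A matrix is a submatrix of another if obtained by deleting rows and/or columns; the pattern order on permutations is this order restricted to permutation matrices, and a permutation class is a set closed downward for it. The $p$-basis of a class $\mathcal{C}$ is the set of permutations not in $\mathcal{C}$ that are minimal for the pattern order among those not in $\mathcal{C}$. Two permutation classes are Wilf-equivalent if for every $n$ they contain the same number of permutations of size $n$. For a permutation $\tau$, $M_{\tau,top}$ (resp. $M_{\tau,bottom}$) is the matrix obtained by adding a row of $0$'s above (resp. below) the permutation matrix of $\tau$, and $M_{\tau,right}$ (resp. $M_{\tau,left}$) by adding a column of $0$'s to its right (resp. left). $Av_{\mathfrak{S}}(\mathcal{M})$ is the set of permutations with no submatrix in $\mathcal{M}$. *)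

From mathcomp Require Import all_boot all_order all_algebra all_fingroup.
From mathcomp Require Import boolp.
Set Implicit Arguments. Unset Strict Implicit. Unset Printing Implicit Defensive.

(* Permutation matrix: M_s(i,j) = 1 iff i = s(j); row index i, row 0 is the
   bottom row. Entries are booleans (true = 1, false = 0). *)
Definition permmx n (s : 'S_n) : 'M[bool]_(n, n) := \matrix_(i, j) (i == s j).

Definition submx_of p q m n (A : 'M[bool]_(p, q)) (B : 'M[bool]_(m, n)) : Prop :=
  exists (f : 'I_p -> 'I_m) (g : 'I_q -> 'I_n),
    (forall i i' : 'I_p, (i < i')%N -> (f i < f i')%N) /\
    (forall j j' : 'I_q, (j < j')%N -> (g j < g j')%N) /\
    (forall i j, A i j = B (f i) (g j)).

Definition patt k n (s : 'S_k) (t : 'S_n) : Prop := submx_of (permmx s) (permmx t).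

Definition permset := forall n, {set 'S_n}.

Definition is_perm_class (C : permset) : Prop :=
  forall k n (s : 'S_k) (t : 'S_n), t \in C n -> patt s t -> s \in C k.

Definition is_pbasis (C B : permset) : Prop :=
  forall k (s : 'S_k),
    s \in B k <->
    (s \notin C k /\
     forall k' (s' : 'S_k'), s' \notin C k' -> patt s' s -> patt s s').

Definition wilf_equiv (C1 C2 : permset) : Prop :=
  forall n, #|C1 n| = #|C2 n|.

(* M_{tau,top}: a zero row added above (new row index k, the top). *)
Definition Mtop k (t : 'S_k) : 'M[bool]_(k.+1, k) :=
  \matrix_(i, j) (val i == val (t j)).
(* M_{tau,bottom}: a zero row added below (new row index 0). *)
Definition Mbottom k (t : 'S_k) : 'M[bool]_(k.+1, k) :=
  \matrix_(i, j) (val i == (val (t j)).+1).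
(* M_{tau,right}: a zero column added to the right (new column index k). *)
Definition Mright k (t : 'S_k) : 'M[bool]_(k, k.+1) :=
  \matrix_(i, j) [exists j' : 'I_k, (val j' == val j) && (i == t j')].
(* M_{tau,left}: a zero column added to the left (new column index 0). *)
Definition Mleft k (t : 'S_k) : 'M[bool]_(k, k.+1) :=
  \matrix_(i, j) [exists j' : 'I_k, (val j == (val j').+1) && (i == t j')].

Inductive side := Top | Bottom | Right | Left.

Definition contains_side (x : side) k (t : 'S_k) n (s : 'S_n) : Prop :=
  match x with
  | Top => submx_of (Mtop t) (permmx s)
  | Bottom => submx_of (Mbottom t) (permmx s)
  | Right => submx_of (Mright t) (permmx s)
  | Left => submx_of (Mleft t) (permmx s)
  end.

Definition AvS (x : side) (B : permset) : permset :=
  fun n => [set s : 'S_n | `[< forall k (t : 'S_k), t \in B k -> ~ contains_side x t s >] ].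

(* The eight classes all have (n+1) |C_1 n| elements of size n+1.  A permutation
   s of size n+1 contains M_{tau,top} iff tau is a pattern of the permutation
   obtained from s by deleting its topmost point (the point in the top row), and
   similarly for the other three sides.  Hence s avoids all M_{tau,x}, tau in the
   basis of C, iff that deletion lies in C.  Conversely a permutation of size n+1
   is determined by its deletion together with the position of the deleted point
   (its column for top/bottom, its row for right/left), which can be arbitrary. *)
From mathcomp Require Import all_boot all_order all_algebra all_fingroup.
From mathcomp Require Import boolp.
From mathcomp Require Import zify.
Set Implicit Arguments. Unset Strict Implicit. Unset Printing Implicit Defensive.

Definition increasing p m (f : 'I_p -> 'I_m) :=
  forall i i' : 'I_p, (i < i')%N -> (f i < f i')%N.

Lemma ltn_lift m (h : 'I_m.+1) (i j : 'I_m) : (lift h i < lift h j)%N = (i < j)%N.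
Proof. by rewrite /= !ltnNge leq_bump2. Qed.

Lemma val_lift_max m (a : 'I_m) : val (lift ord_max a) = val a.
Proof. exact: lift_max. Qed.

Lemma val_lift0 m (a : 'I_m) : val (lift ord0 a) = (val a).+1.
Proof. by []. Qed.

Lemma increasing_lift p m (h : 'I_m.+1) (f : 'I_p -> 'I_m) :
  increasing f -> increasing (lift h \o f).
Proof. by move=> Hf i i' /Hf; rewrite /= -(ltn_lift h). Qed.

Lemma increasing_inj p m (f : 'I_p -> 'I_m) : increasing f -> injective f.
Proof.
move=> Hf i j E; apply/eqP; case: (ltngtP i j) => [/Hf|/Hf|/val_inj -> //];
  by rewrite E ltnn.
Qed.

Lemma increasing_geq p m (f : 'I_p -> 'I_m) (Hf : increasing f) (i : 'I_p) :
  (i <= f i)%N.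
Proof.
move Ei: (nat_of_ord i) => q; elim: q i Ei => [//|q IH] i Ei.
have lq : (q < p)%N by have := ltn_ord i; lia.
have := IH (Ordinal lq) erefl; have : (Ordinal lq < i)%N by rewrite /= Ei.
move/Hf; lia.
Qed.

Lemma increasing_id p (f : 'I_p -> 'I_p) : increasing f -> f =1 id.
Proof.
move=> Hf i; apply: val_inj; apply/eqP; rewrite eqn_leq (increasing_geq Hf) andbT.
pose g j := rev_ord (f (rev_ord j)).
have Hg : increasing g.
  move=> j j' lt_jj'; rewrite /g /=.
  have : (rev_ord j' < rev_ord j)%N by rewrite /=; have := ltn_ord j'; lia.
  move/Hf; have := ltn_ord (f (rev_ord j)); have := ltn_ord (f (rev_ord j')); lia.
have := increasing_geq Hg (rev_ord i); rewrite /g rev_ordK /=.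
have := ltn_ord i; have := ltn_ord (f i); lia.
Qed.

Lemma increasing_ext_max p m (h0 : 'I_p -> 'I_m.+1) :
  increasing h0 -> (forall a, h0 a != ord_max) ->
  exists h : 'I_p.+1 -> 'I_m.+1,
    [/\ increasing h, h ord_max = ord_max & forall a, h (lift ord_max a) = h0 a].
Proof.
move=> Hi Hn.
exists (fun i => if unlift ord_max i is Some a then h0 a else ord_max); split.
- move=> i i'; case: (unliftP ord_max i) => [a|] ->;
    case: (unliftP ord_max i') => [a'|] ->.
  + by rewrite ltn_lift => /Hi.
  + move=> _; have := Hn a; have := ltn_ord (h0 a).
    by rewrite -(inj_eq val_inj) /=; lia.
  + by rewrite lift_max /=; have := ltn_ord a'; rewrite /=; lia.
  + by rewrite ltnn.
- by rewrite unlift_none.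
- by move=> a; rewrite liftK.
Qed.

Lemma increasing_ext_0 p m (h0 : 'I_p -> 'I_m.+1) :
  increasing h0 -> (forall a, h0 a != ord0) ->
  exists h : 'I_p.+1 -> 'I_m.+1,
    [/\ increasing h, h ord0 = ord0 & forall a, h (lift ord0 a) = h0 a].
Proof.
move=> Hi Hn.
exists (fun i => if unlift ord0 i is Some a then h0 a else ord0); split.
- move=> i i'; case: (unliftP ord0 i) => [a|] ->;
    case: (unliftP ord0 i') => [a'|] ->.
  + by rewrite ltn_lift => /Hi.
  + by rewrite lift0.
  + by move=> _; have := Hn a'; rewrite -(inj_eq val_inj) /=; lia.
  + by rewrite ltnn.
- by rewrite unlift_none.
- by move=> a; rewrite liftK.
Qed.

Lemma unlift_fun p m (h : 'I_m.+1) (f : 'I_p -> 'I_m.+1) :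
  (forall a, f a != h) -> exists f' : 'I_p -> 'I_m, forall a, f a = lift h (f' a).
Proof.
move=> H; have H' a : h != f a by rewrite eq_sym.
exists (fun a => s2val (unlift_some (H' a))) => a.
by case: (unlift_some (H' a)).
Qed.

(* Deleting the point in column c from s : 'S_n.+1; the inverse of lift_perm. *)
Definition del_perm_fun n (s : 'S_n.+1) (c : 'I_n.+1) (k : 'I_n) : 'I_n :=
  odflt k (unlift (s c) (s (lift c k))).

Lemma lift_del_perm_fun n (s : 'S_n.+1) c k :
  lift (s c) (del_perm_fun s c k) = s (lift c k).
Proof.
have ne : s c != s (lift c k) by rewrite (inj_eq perm_inj) neq_lift.
by case: (unlift_some ne) => j E1 E2; rewrite /del_perm_fun E2 /= E1.
Qed.

Lemma del_perm_fun_inj n (s : 'S_n.+1) c : injective (del_perm_fun s c).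
Proof.
move=> k1 k2 E; have := lift_del_perm_fun s c k1.
by rewrite E lift_del_perm_fun => /perm_inj /lift_inj.
Qed.

Definition del_perm n (s : 'S_n.+1) c : 'S_n := perm (@del_perm_fun_inj n s c).

Lemma del_permE n (s : 'S_n.+1) c k : s (lift c k) = lift (s c) (del_perm s c k).
Proof. by rewrite permE lift_del_perm_fun. Qed.

Lemma del_permK n (s : 'S_n.+1) c : lift_perm c (s c) (del_perm s c) = s.
Proof.
apply/permP=> x; case: (unliftP c x) => [k|] ->.
  by rewrite lift_perm_lift del_permE.
by rewrite lift_perm_id.
Qed.

Lemma lift_permK n (c r : 'I_n.+1) (p : 'S_n) : del_perm (lift_perm c r p) c = p.
Proof.
apply/permP=> k; apply: (@lift_inj _ r).
by rewrite -{1}(lift_perm_id c r p) -del_permE lift_perm_lift.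
Qed.

Lemma permmxE n (s : 'S_n) i j : permmx s i j = (i == s j).
Proof. by rewrite mxE. Qed.

Lemma patt_refl k (s : 'S_k) : patt s s.
Proof. by exists id, id. Qed.

Lemma patt_trans a b c (r : 'S_a) (s : 'S_b) (t : 'S_c) :
  patt r s -> patt s t -> patt r t.
Proof.
move=> [f [g [Hf [Hg HE]]]] [f' [g' [Hf' [Hg' HE']]]].
exists (f' \o f), (g' \o g); split; [|split].
- by move=> i i' /Hf /Hf'.
- by move=> i i' /Hg /Hg'.
by move=> i j; rewrite HE HE'.
Qed.

Lemma patt_leq k n (s : 'S_k) (t : 'S_n) : patt s t -> (k <= n)%N.
Proof.
move=> [f [_ [Hf _]]]; have := leq_card f (increasing_inj Hf).
by rewrite !card_ord.
Qed.

Lemma patt_same_size k (s t : 'S_k) : patt s t -> patt t s.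
Proof.
move=> [f [g [Hf [Hg HE]]]]; exists id, id; split; [|split] => // i j.
by rewrite HE !increasing_id.
Qed.

Lemma permmx_sub_col k n (t : 'S_k) (s : 'S_n) f g :
  (forall a b, (a == t b) = (f a == s (g b))) -> forall a, f a = s (g ((t^-1)%g a)).
Proof. by move=> HE a; apply/eqP; rewrite -HE permKV. Qed.

Lemma patt_del_perm k n (t : 'S_k) (s : 'S_n.+1) (c : 'I_n.+1) :
  patt t (del_perm s c) <-> exists f g,
    [/\ increasing f, increasing g, forall b, g b != c &
        forall a b, (a == t b) = (f a == s (g b))].
Proof.
split.
  move=> [f [g [Hf [Hg HE]]]].
  exists (lift (s c) \o f), (lift c \o g); split.
  - exact: increasing_lift.
  - exact: increasing_lift.
  - by move=> b; rewrite /= lift_eqF.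
  move=> a b; have := HE a b; rewrite !permmxE => ->.
  by rewrite /= del_permE (inj_eq lift_inj).
move=> [f [g [Hf Hg Hc HE]]].
have Hr a : f a != s c.
  by rewrite (permmx_sub_col HE) (inj_eq perm_inj).
have [f' Ef] := unlift_fun Hr; have [g' Eg] := unlift_fun Hc.
exists f', g'; split; [|split].
- by move=> i i' /Hf; rewrite !Ef ltn_lift.
- by move=> i i' /Hg; rewrite !Eg ltn_lift.
by move=> a b; rewrite !permmxE HE Ef Eg del_permE (inj_eq lift_inj).
Qed.

Definition side_col (x : side) n (s : 'S_n.+1) : 'I_n.+1 :=
  match x with
  | Top => (s^-1)%g ord_max
  | Bottom => (s^-1)%g ord0
  | Right => ord_max
  | Left => ord0
  end.

Lemma contains_top k n (t : 'S_k) (s : 'S_n.+1) :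
  contains_side Top t s <-> patt t (del_perm s (side_col Top s)).
Proof.
rewrite patt_del_perm /=; split.
  move=> [f [g [Hf [Hg HE]]]].
  have HE' a b : (a == t b) = (f (lift ord_max a) == s (g b)).
    by have := HE (lift ord_max a) b; rewrite !mxE val_lift_max (inj_eq val_inj).
  exists (f \o lift ord_max), g; split => //.
  - by move=> i i' /=; rewrite -(ltn_lift ord_max) => /Hf.
  - move=> b; apply/negP => /eqP Eb.
    have := HE' (t b) b; rewrite eqxx Eb permKV => /esym/eqP Em.
    have : (lift ord_max (t b) < @ord_max k)%N by rewrite lift_max /=.
    by move/Hf; rewrite Em; have := ltn_ord (f ord_max); rewrite /=; lia.
move=> [f0 [g [Hf0 Hg Hc HE]]].
have Hn a : f0 a != ord_max.
  rewrite (permmx_sub_col HE); apply/negP => /eqP E.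
  by move: (Hc ((t^-1)%g a)); rewrite -E permK eqxx.
have [f [Hf Hfm Hfl]] := increasing_ext_max Hf0 Hn.
exists f, g; split => //; split => // i j; rewrite !mxE.
case: (unliftP (@ord_max k) i) => [a|] ->.
  by rewrite Hfl val_lift_max (inj_eq val_inj) HE.
rewrite Hfm /=; have := ltn_ord (t j); have := Hc j => Hcj Ht.
have -> : (k == t j) = false by apply/eqP; lia.
by apply/esym/eqP => E; move/eqP: Hcj; apply; rewrite E permK.
Qed.

Lemma contains_bottom k n (t : 'S_k) (s : 'S_n.+1) :
  contains_side Bottom t s <-> patt t (del_perm s (side_col Bottom s)).
Proof.
rewrite patt_del_perm /=; split.
  move=> [f [g [Hf [Hg HE]]]].
  have HE' a b : (a == t b) = (f (lift ord0 a) == s (g b)).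
    by have := HE (lift ord0 a) b; rewrite !mxE val_lift0 eqSS (inj_eq val_inj).
  exists (f \o lift ord0), g; split => //.
  - by move=> i i' /=; rewrite -(ltn_lift ord0) => /Hf.
  - move=> b; apply/negP => /eqP Eb.
    have := HE' (t b) b; rewrite eqxx Eb permKV => /esym/eqP Em.
    have : (@ord0 k < lift ord0 (t b))%N by rewrite lift0.
    by move/Hf; rewrite Em.
move=> [f0 [g [Hf0 Hg Hc HE]]].
have Hn a : f0 a != ord0.
  rewrite (permmx_sub_col HE); apply/negP => /eqP E.
  by move: (Hc ((t^-1)%g a)); rewrite -E permK eqxx.
have [f [Hf Hfm Hfl]] := increasing_ext_0 Hf0 Hn.
exists f, g; split => //; split => // i j; rewrite !mxE.
case: (unliftP (@ord0 k) i) => [a|] ->.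
  by rewrite Hfl val_lift0 eqSS (inj_eq val_inj) HE.
rewrite Hfm /=; have /eqP Hcj := Hc j.
by apply/esym/eqP => E; apply: Hcj; rewrite E permK.
Qed.

Lemma Mright_lift k (t : 'S_k) i b : Mright t i (lift ord_max b) = (i == t b).
Proof.
rewrite mxE; apply/existsP/idP => [[j' /andP[/eqP E H]]|H].
  by have -> : b = j' by apply: val_inj; rewrite E val_lift_max.
by exists b; rewrite val_lift_max eqxx.
Qed.

Lemma Mright_max k (t : 'S_k) i : Mright t i ord_max = false.
Proof.
rewrite mxE; apply/existsP => [[j' /andP[/eqP E _]]].
by have := ltn_ord j'; rewrite E /= ltnn.
Qed.

Lemma Mleft_lift k (t : 'S_k) i b : Mleft t i (lift ord0 b) = (i == t b).
Proof.
rewrite mxE; apply/existsP/idP => [[j' /andP[/eqP E H]]|H].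
  by have -> : b = j' by apply: val_inj; move: E; rewrite val_lift0 => -[].
by exists b; rewrite val_lift0 eqxx.
Qed.

Lemma Mleft_0 k (t : 'S_k) i : Mleft t i ord0 = false.
Proof. by rewrite mxE; apply/existsP => [[j' /andP[/eqP E _]]]. Qed.

Lemma contains_right k n (t : 'S_k) (s : 'S_n.+1) :
  contains_side Right t s <-> patt t (del_perm s (side_col Right s)).
Proof.
rewrite patt_del_perm /=; split.
  move=> [f [g [Hf [Hg HE]]]].
  exists f, (g \o lift ord_max); split => //.
  - by move=> i i' /=; rewrite -(ltn_lift ord_max) => /Hg.
  - move=> b; apply/negP => /eqP /= Eb.
    have : (lift ord_max b < @ord_max k)%N by rewrite lift_max /=.
    by move/Hg; rewrite Eb; have := ltn_ord (g ord_max); rewrite /=; lia.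
  - by move=> a b; have := HE a (lift ord_max b); rewrite Mright_lift permmxE.
move=> [f [g0 [Hf Hg0 Hc HE]]].
have [g [Hg Hgm Hgl]] := increasing_ext_max Hg0 Hc.
exists f, g; split => //; split => // i j.
case: (unliftP (@ord_max k) j) => [b|] ->.
  by rewrite Mright_lift permmxE Hgl HE.
rewrite Mright_max permmxE Hgm (permmx_sub_col HE); apply/esym/eqP => /perm_inj E.
by move: (Hc ((t^-1)%g i)); rewrite E eqxx.
Qed.

Lemma contains_left k n (t : 'S_k) (s : 'S_n.+1) :
  contains_side Left t s <-> patt t (del_perm s (side_col Left s)).
Proof.
rewrite patt_del_perm /=; split.
  move=> [f [g [Hf [Hg HE]]]].
  exists f, (g \o lift ord0); split => //.
  - by move=> i i' /=; rewrite -(ltn_lift ord0) => /Hg.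
  - move=> b; apply/negP => /eqP /= Eb.
    have : (@ord0 k < lift ord0 b)%N by rewrite lift0.
    by move/Hg; rewrite Eb.
  - by move=> a b; have := HE a (lift ord0 b); rewrite Mleft_lift permmxE.
move=> [f [g0 [Hf Hg0 Hc HE]]].
have [g [Hg Hgm Hgl]] := increasing_ext_0 Hg0 Hc.
exists f, g; split => //; split => // i j.
case: (unliftP (@ord0 k) j) => [b|] ->.
  by rewrite Mleft_lift permmxE Hgl HE.
rewrite Mleft_0 permmxE Hgm (permmx_sub_col HE); apply/esym/eqP => /perm_inj E.
by move: (Hc ((t^-1)%g i)); rewrite E eqxx.
Qed.

Lemma contains_sideE x k n (t : 'S_k) (s : 'S_n.+1) :
  contains_side x t s <-> patt t (del_perm s (side_col x s)).
Proof.
by case: x; [exact: contains_top | exact: contains_bottom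
            | exact: contains_right | exact: contains_left].
Qed.

Section Basis.

Variables (C B : permset).
Hypotheses (classC : is_perm_class C) (basisB : is_pbasis C B).

Lemma notin_class_basis n (s : 'S_n) :
  s \notin C n -> exists k (t : 'S_k), t \in B k /\ patt t s.
Proof.
elim: n.+1 {-2}n (ltnSn n) s => [//|m IH] {}n lt_nm s sC.
have [sB|sNB] := boolP (s \in B n); first by exists n, s; split; last exact: patt_refl.
have : ~ (forall k' (s' : 'S_k'), s' \notin C k' -> patt s' s -> patt s s').
  by move=> Hall; move/negP: sNB; apply; apply/(basisB s).2.
move=> /existsNP [k' /existsNP [s' /not_implyP [s'C /not_implyP [s's not_ss']]]].
have [lt_k'n|gt_k'n|eq_k'n] := ltngtP k' n.
- have [k [t [tB ts']]] := IH k' (leq_trans lt_k'n lt_nm) s' s'C.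
  by exists k, t; split => //; exact: patt_trans s's.
- by move: (patt_leq s's); rewrite leqNgt gt_k'n.
- by move: s' s'C s's not_ss'; rewrite eq_k'n => s' _ /patt_same_size ss' /(_ ss').
Qed.

Lemma class_avoid_basis n (s : 'S_n) :
  s \in C n <-> forall k (t : 'S_k), t \in B k -> ~ patt t s.
Proof.
split=> [sC k t tB ts|avoid].
  by have [] := (basisB t).1 tB; rewrite (classC sC ts).
apply/negPn/negP => /notin_class_basis [k [t [tB ts]]]; exact: avoid k t tB ts.
Qed.

Lemma AvS_del_perm x n : AvS x B n.+1 = [set s | del_perm s (side_col x s) \in C n].
Proof.
apply/setP => s; rewrite !inE; apply/asboolP/idP => [avoid|/class_avoid_basis avoid k t tB].
  by apply/class_avoid_basis => k t tB; rewrite -contains_sideE; exact: avoid.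
by rewrite contains_sideE; exact: avoid.
Qed.

End Basis.

(* A permutation s of size n+1 is rebuilt from its deletion and from the index
   a = pos s, the deleted point being at column col a and row row a. *)
Lemma card_del_perm_preim n (P : {set 'S_n}) (del_col : 'S_n.+1 -> 'I_n.+1)
    (col row : 'I_n.+1 -> 'I_n.+1) (pos : 'S_n.+1 -> 'I_n.+1) :
  (forall a p, del_col (lift_perm (col a) (row a) p) = col a) ->
  (forall a p, pos (lift_perm (col a) (row a) p) = a) ->
  (forall s, col (pos s) = del_col s) -> (forall s, row (pos s) = s (del_col s)) ->
  #|[set s | del_perm s (del_col s) \in P]| = n.+1 * #|P|.
Proof.
move=> del_colE posE colE rowE.
pose F (q : 'I_n.+1 * 'S_n) := lift_perm (col q.1) (row q.1) q.2.
have injF : injective F.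
  move=> [a p] [b p'] E; rewrite /F /= in E.
  have Eab : a = b by rewrite -(posE a p) E posE.
  by subst b; rewrite -(lift_permK (col a) (row a) p) E lift_permK.
have -> : [set s | del_perm s (del_col s) \in P] = F @: (setX [set: 'I_n.+1] P).
  apply/setP => s; rewrite inE; apply/idP/imsetP.
  - move=> Ps; exists (pos s, del_perm s (del_col s)); first by rewrite in_setX in_setT Ps.
    by rewrite /F /= colE rowE del_permK.
  - move=> [[a p]]; rewrite in_setX => /andP[_ Pp] ->.
    by rewrite /F /= del_colE lift_permK.
by rewrite card_imset // cardsX cardsT card_ord.
Qed.

Lemma card_del_perm_side x n (P : {set 'S_n}) :
  #|[set s | del_perm s (side_col x s) \in P]| = n.+1 * #|P|.
Proof.
case: x.
- apply: (@card_del_perm_preim n P (@side_col Top n) id (fun=> ord_max) (@side_col Top n))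
    => //= [a p|a p|s]; rewrite ?permKV // -{2}(lift_perm_id a ord_max p) permK //.
- apply: (@card_del_perm_preim n P (@side_col Bottom n) id (fun=> ord0) (@side_col Bottom n))
    => //= [a p|a p|s]; rewrite ?permKV // -{2}(lift_perm_id a ord0 p) permK //.
- apply: (@card_del_perm_preim n P (@side_col Right n) (fun=> ord_max) id (fun s => s ord_max))
    => //= a p; exact: lift_perm_id.
- apply: (@card_del_perm_preim n P (@side_col Left n) (fun=> ord0) id (fun s => s ord0))
    => //= a p; exact: lift_perm_id.
Qed.

Lemma card_AvS x (C B : permset) : is_perm_class C -> is_pbasis C B ->
  forall n, #|AvS x B n.+1| = n.+1 * #|C n|.
Proof. by move=> classC basisB n; rewrite (AvS_del_perm classC basisB) card_del_perm_side. Qed.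

Lemma AvS0 x (B : permset) : AvS x B 0 = [set: 'S_0].
Proof.
apply/setP => s; rewrite !inE; apply/asboolP => k t _.
by case: x => -[f [g _]]; [case: (f ord0) | case: (f ord0) | case: (g ord0) | case: (g ord0)].
Qed.

Unset Implicit Arguments.
Theorem corollary3 (C1 C2 B1 B2 : permset) :
  is_perm_class C1 -> is_perm_class C2 ->
  is_pbasis C1 B1 -> is_pbasis C2 B2 ->
  wilf_equiv C1 C2 ->
  forall (i j : bool) (x y : side),
    wilf_equiv (AvS x (if i then B1 else B2)) (AvS y (if j then B1 else B2)).
Proof.
move=> classC1 classC2 basisB1 basisB2 wilfC i j x y [|n]; first by rewrite !AvS0.
have cardAvS (b : bool) z : #|AvS z (if b then B1 else B2) n.+1| = n.+1 * #|C1 n|.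
  case: b; first exact: card_AvS.
  by rewrite wilfC; exact: card_AvS.
by rewrite !cardAvS.
Qed.
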